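(* Let $\mathcal V_{r_p}=\{\bm v_1,\ldots,\bm v_{r_p}\}\subset\mathbb R^q$ be the UD skeleton, let $\mathcal K$ be a reproducing kernel on $[0,1]^q\times[0,1]^q$, and let $f:[0,1]^q\to\mathbb R$ have $V_2(f,\mathcal K)<\infty$ and be such that $\varphi_f(\bm z)=f(T_{\bm Z}(\bm z))$ is Lipschitz on $\mathcal Z\cup\mathcal V_{r_p}$ with constant $L_f$. Then for $\phi_f(\bm x)=f(\mathcal T(\bm x))$, \[ \left|\int\phi_f\,dP_{\mathcal S_1,\bm X}-\int\phi_f\,dP_{\mathcal S_0,\bm X}\right|\le L_f\bigl(\delta_1^{(\mathrm{rot})}+\delta_0^{(\mathrm{rot})}\bigr). \]
   Context: Data: $(Y_i,W_i,\bm X_i)$, $i=1,\ldots,n$, with $W_i\in\{0,1\}$, $\bm X_i\in\mathbb R^p$; both arms nonempty. Let $\bar{\bm X}=n^{-1}\sum_i\bm X_i$, $\widehat{\bm D}$ the diagonal matrix of (positive) sample standard deviations, $\widetilde{\bm X}_i=\widehat{\bm D}^{-1}(\bm X_i-\bar{\bm X})$, $\widetilde{\bm X}=\bm U\bm\Sigma\bm V^\top$ the SVD (singular values decreasing) of the matrix with rows $\widetilde{\bm X}_i^\top$; for chosen $q\le p$, $\bm V_q$ = first $q$ columns of $\bm V$, $\Pi_q(\bm x)=\bm V_q^\top\widehat{\bm D}^{-1}(\bm x-\bar{\bm X})$, $\bm Z_i=\Pi_q(\bm X_i)$, $\mathcal Z=\{\bm Z_i\}_{i=1}^n$. $\widehat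 F_{Z^{(d)}}$ is the empirical CDF of $\{Z_i^{(d)}\}_i$, $T_{\bm Z}(\bm z)=(\widehat F_{Z^{(1)}}(z^{(1)}),\ldots,\widehat F_{Z^{(q)}}(z^{(q)}))^\top$, $\mathcal T(\bm x)=T_{\bm Z}(\Pi_q(\bm x))$. The UD skeleton $\mathcal V_{r_p}=\{\bm v_j\}\subset\mathbb R^q$ has $\bm v_j=(\widehat F^{-1}_{Z^{(1)}}(u_{j1}),\ldots,\widehat F^{-1}_{Z^{(q)}}(u_{jq}))^\top$ for a design $\{\bm u_j\}\subset[0,1]^q$. For $g\in\{0,1\}$, $i_j^g\in\arg\min_{i:W_i=g}\|\bm Z_i-\bm v_j\|_2$, $\mathcal S_g=\{i_j^g\}_{j=1}^{r_p}$, $\delta_g^{(\mathrm{rot})}=\max_j\|\bm Z_{i_j^g}-\bm v_j\|_2$, and $P_{\mathcal S_g,\bm X}=r_p^{-1}\sum_{j=1}^{r_p}\delta_{\bm X_{i_j^g}}$. $V_2(f,\mathcal K)$ is the generalized (Hickernell) variation of $f$ with respect to $\mathcal K$ (the quantity appearing in the Koksma–Hlawka inequality $|n^{-1}\sum_i f(T_{\bm Z}(\bm Z_i))-m^{-1}\sum_k f(T_{\bm Z}(\bm\xi_k))|\le D(\{\bm\xi_k\};\mathcal Z,\mathcal K)V_2(f,\mathcal K)$, with $D$ the generalized empirical $F$-discrepancy). *)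

From HB Require Import structures.
From mathcomp Require Import all_boot all_order all_algebra.
From mathcomp Require Import boolp classical_sets reals.
Set Implicit Arguments. Unset Strict Implicit. Unset Printing Implicit Defensive.
Import Order.TTheory GRing.Theory Num.Theory.
Local Open Scope ring_scope.

Section UD.
Variable R : realType.

Definition norm2 (k : nat) (x : 'rV[R]_k) : R := Num.sqrt (\sum_(d < k) x 0 d ^+ 2).

Definition in_cube (k : nat) (x : 'rV[R]_k) : Prop := forall d, 0 <= x 0 d <= 1.

Section Data.
Variables (n p : nat) (X : 'I_n -> 'rV[R]_p).

Definition xbar : 'rV[R]_p := n%:R^-1 *: \sum_(i < n) X i.

Definition sdev (d : 'I_p) : R :=
  Num.sqrt ((n.-1)%:R^-1 * \sum_(i < n) (X i 0 d - xbar 0 d) ^+ 2).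

Definition standardize (x : 'rV[R]_p) : 'rV[R]_p :=
  \row_d ((x 0 d - xbar 0 d) / sdev d).

Definition Xtilde : 'M[R]_(n, p) := \matrix_(i, d) standardize (X i) 0 d.

(* Pi_q(x) = V_q^T D^{-1}(x - \bar X), written as a row vector *)
Definition Piq (q : nat) (hq : (q <= p)%N) (V : 'M[R]_p) (x : 'rV[R]_p) : 'rV[R]_q :=
  standardize x *m (\matrix_(d, k) V d (widen_ord hq k)).

Definition Zdata (q : nat) (hq : (q <= p)%N) (V : 'M[R]_p) : 'I_n -> 'rV[R]_q :=
  fun i => Piq hq V (X i).
End Data.

Definition is_svd (n p : nat) (A : 'M[R]_(n, p)) (U : 'M[R]_n) (S : 'M[R]_(n, p))
    (V : 'M[R]_p) : Prop :=
  [/\ U^T *m U = 1%:M, V^T *m V = 1%:M, A = U *m S *m V^T &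
   [/\
      (forall (i : 'I_n) (j : 'I_p), (i : nat) <> j -> S i j = 0),
      (forall (i : 'I_n) (j : 'I_p), (i : nat) = j -> 0 <= S i j) &
      (forall (i i' : 'I_n) (j j' : 'I_p), (i : nat) = j -> (i' : nat) = j' ->
          (i <= i')%N -> S i' j' <= S i j)]].

Section Transform.
Variables (n q : nat) (Z : 'I_n -> 'rV[R]_q).

Definition ecdf (d : 'I_q) (t : R) : R :=
  n%:R^-1 * (#|[set i : 'I_n | Z i 0 d <= t]|)%:R.

Definition TZ (z : 'rV[R]_q) : 'rV[R]_q := \row_d ecdf d (z 0 d).

Definition quantile (d : 'I_q) (u : R) : R := inf [set t : R | u <= ecdf d t].

Definition skeleton (r : nat) (u : 'I_r -> 'rV[R]_q) : 'I_r -> 'rV[R]_q :=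
  fun j => \row_d quantile d (u j 0 d).

Definition nn_selection (r : nat) (W : 'I_n -> bool) (v : 'I_r -> 'rV[R]_q)
    (g : bool) (sel : 'I_r -> 'I_n) : Prop :=
  forall j, W (sel j) = g /\
    (forall i, W i = g -> norm2 (Z (sel j) - v j) <= norm2 (Z i - v j)).

Definition delta_rot (r : nat) (v : 'I_r -> 'rV[R]_q) (sel : 'I_r -> 'I_n) : R :=
  \big[Num.max/0]_(j < r) norm2 (Z (sel j) - v j).
End Transform.

(* integral of g against P_{S,X} = r^{-1} sum_j delta_{X_{sel j}} *)
Definition emp_int (n p r : nat) (X : 'I_n -> 'rV[R]_p) (sel : 'I_r -> 'I_n)
    (g : 'rV[R]_p -> R) : R :=
  r%:R^-1 * \sum_(j < r) g (X (sel j)).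

Definition is_rep_kernel (q : nat) (K : 'rV[R]_q -> 'rV[R]_q -> R) : Prop :=
  (forall x y, in_cube x -> in_cube y -> K x y = K y x) /\
  (forall (m : nat) (xs : 'I_m -> 'rV[R]_q) (c : 'I_m -> R),
      (forall i, in_cube (xs i)) ->
      0 <= \sum_(i < m) \sum_(j < m) c i * c j * K (xs i) (xs j)).

(* V_2(f,K) < oo : f lies in the RKHS of K (Aronszajn's characterisation:
   point evaluations of f are bounded in the kernel norm) *)
Definition finite_variation (q : nat) (K : 'rV[R]_q -> 'rV[R]_q -> R)
    (f : 'rV[R]_q -> R) : Prop :=
  exists M : R, forall (m : nat) (xs : 'I_m -> 'rV[R]_q) (c : 'I_m -> R),
    (forall i, in_cube (xs i)) ->
    (\sum_(i < m) c i * f (xs i)) ^+ 2 <=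
      M * \sum_(i < m) \sum_(j < m) c i * c j * K (xs i) (xs j).

Definition lipschitz_on (q : nat) (A : 'rV[R]_q -> Prop) (phi : 'rV[R]_q -> R)
    (L : R) : Prop :=
  forall a b, A a -> A b -> `|phi a - phi b| <= L * norm2 (a - b).

End UD.

(* For each skeleton point v_j the two selected units Z_{i_j^1} and Z_{i_j^0}
   lie within delta_1 and delta_0 of v_j, so the Lipschitz bound of
   phi = f o T_Z through v_j gives
   |phi(Z_{i_j^1}) - phi(Z_{i_j^0})| <= L_f (delta_1 + delta_0).
   Averaging over j yields the claim; only the Lipschitz bound at the pairs
   (Z_i, v_j) is used, not the nearest-neighbour property of the selections. *)
From HB Require Import structures.
From mathcomp Require Import all_boot all_order all_algebra.
From mathcomp Require Import boolp classical_sets reals.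
Set Implicit Arguments. Unset Strict Implicit. Unset Printing Implicit Defensive.
Import Order.TTheory GRing.Theory Num.Theory.
Local Open Scope ring_scope.

Lemma norm2_ge0 (R : realType) (k : nat) (x : 'rV[R]_k) : 0 <= norm2 x.
Proof. exact: sqrtr_ge0. Qed.

(* [c] may be negative: then every [c * x i >= 0] forces [x i = 0]. *)
Lemma mulr_bigmax0 (R : realDomainType) (I : finType) (c : R) (x : I -> R) :
  (forall i, 0 <= x i) -> (forall i, 0 <= c * x i) ->
  c * \big[Num.max/0]_i x i = \big[Num.max/0]_i (c * x i).
Proof.
move=> x_ge0 cx_ge0; have [c_ge0 | c_lt0] := leP 0 c.
  elim/big_rec2: _ => [|i y1 y2 _ <-]; first by rewrite mulr0.
  by rewrite maxr_pMr.
have x0 i : x i = 0.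
  by apply/eqP; rewrite eq_le x_ge0 andbT -(nmulr_rge0 _ c_lt0).
have bigmax0 (F : I -> R) : (forall i, F i = 0) -> \big[Num.max/0]_i F i = 0.
  by move=> F0; elim/big_rec: _ => // i y _ ->; rewrite F0 maxxx.
by rewrite !bigmax0 ?mulr0 // => i; rewrite x0 mulr0.
Qed.

Lemma norm_emp_intB_le (R : realType) (n p r : nat) (X : 'I_n -> 'rV[R]_p)
    (sel1 sel0 : 'I_r -> 'I_n) (g : 'rV[R]_p -> R) (C : R) :
  0 <= C -> (forall j, `|g (X (sel1 j)) - g (X (sel0 j))| <= C) ->
  `|emp_int X sel1 g - emp_int X sel0 g| <= C.
Proof.
move=> C_ge0 gC; rewrite /emp_int -mulrBr -sumrB normrM ger0_norm ?invr_ge0 //.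
have sum_le : `|\sum_j (g (X (sel1 j)) - g (X (sel0 j)))| <= C *+ r.
  apply: le_trans (ler_norm_sum _ _ _) _.
  by rewrite -[r in C *+ r]card_ord -sumr_const; apply: ler_sum => j _.
apply: le_trans (ler_wpM2l _ sum_le) _; first by rewrite invr_ge0.
case: r {sel1 sel0 gC sum_le} => [|r]; first by rewrite mulr0n mulr0.
by rewrite -[C *+ _]mulr_natl mulrA mulVf ?pnatr_eq0 // mul1r.
Qed.

Section LipschitzThroughSkeleton.
Variables (R : realType) (n q r : nat) (Z : 'I_n -> 'rV[R]_q).
Variables (v : 'I_r -> 'rV[R]_q) (phi : 'rV[R]_q -> R) (L : R).
Hypothesis phi_lip :
  forall i j, `|phi (Z i) - phi (v j)| <= L * norm2 (Z i - v j).

Lemma mulr_delta_rotE (sel : 'I_r -> 'I_n) :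
  L * delta_rot Z v sel = \big[Num.max/0]_j (L * norm2 (Z (sel j) - v j)).
Proof.
apply: mulr_bigmax0 => j; first exact: norm2_ge0.
exact: le_trans (phi_lip _ _).
Qed.

Lemma mulr_delta_rot_ge0 (sel : 'I_r -> 'I_n) : 0 <= L * delta_rot Z v sel.
Proof. by rewrite mulr_delta_rotE bigmax_ge_id. Qed.

Lemma dist_phi_le_delta_rot (sel : 'I_r -> 'I_n) (j : 'I_r) :
  `|phi (Z (sel j)) - phi (v j)| <= L * delta_rot Z v sel.
Proof.
by rewrite mulr_delta_rotE; apply: le_trans (phi_lip _ _) (le_bigmax _ _ j).
Qed.

Lemma dist_phi_matched_le (sel1 sel0 : 'I_r -> 'I_n) (j : 'I_r) :
  `|phi (Z (sel1 j)) - phi (Z (sel0 j))| <=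
    L * (delta_rot Z v sel1 + delta_rot Z v sel0).
Proof.
have via_vj : phi (Z (sel1 j)) - phi (Z (sel0 j)) =
    (phi (Z (sel1 j)) - phi (v j)) - (phi (Z (sel0 j)) - phi (v j)).
  by rewrite opprB addrA subrK.
rewrite via_vj mulrDr; apply: le_trans (ler_normB _ _) _.
by apply: lerD; apply: dist_phi_le_delta_rot.
Qed.

End LipschitzThroughSkeleton.

Theorem theorem2 (R : realType) (n p q r : nat)
  (Y : 'I_n -> R) (W : 'I_n -> bool) (X : 'I_n -> 'rV[R]_p)
  (arm1 : exists i, W i) (arm0 : exists i, ~~ W i)
  (sd_pos : forall d, 0 < sdev X d)
  (U : 'M[R]_n) (S : 'M[R]_(n, p)) (V : 'M[R]_p)
  (hsvd : is_svd (Xtilde X) U S V)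
  (hq : (q <= p)%N)
  (u : 'I_r -> 'rV[R]_q) (hu : forall j, in_cube (u j))
  (K : 'rV[R]_q -> 'rV[R]_q -> R) (hK : is_rep_kernel K)
  (f : 'rV[R]_q -> R) (hf : finite_variation K f)
  (Lf : R) (sel1 sel0 : 'I_r -> 'I_n)
  (h1 : nn_selection (Zdata X hq V) W (skeleton (Zdata X hq V) u) true sel1)
  (h0 : nn_selection (Zdata X hq V) W (skeleton (Zdata X hq V) u) false sel0)
  (hL : lipschitz_on
          (fun z => (exists i, z = Zdata X hq V i) \/
                    (exists j, z = skeleton (Zdata X hq V) u j))
          (fun z => f (TZ (Zdata X hq V) z)) Lf) :
  `| emp_int X sel1 (fun x => f (TZ (Zdata X hq V) (Piq X hq V x)))
     - emp_int X sel0 (fun x => f (TZ (Zdata X hq V) (Piq X hq V x))) |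
  <= Lf * (delta_rot (Zdata X hq V) (skeleton (Zdata X hq V) u) sel1
           + delta_rot (Zdata X hq V) (skeleton (Zdata X hq V) u) sel0).
Proof.
set Z := Zdata X hq V; set v := skeleton Z u; pose phi z := f (TZ Z z).
have phi_lip i j : `|phi (Z i) - phi (v j)| <= Lf * norm2 (Z i - v j).
  by apply: hL; [left; exists i | right; exists j].
have bound_ge0 : 0 <= Lf * (delta_rot Z v sel1 + delta_rot Z v sel0).
  by rewrite mulrDr addr_ge0 // (mulr_delta_rot_ge0 phi_lip).
exact: norm_emp_intB_le bound_ge0 (dist_phi_matched_le phi_lip sel1 sel0).
Qed.
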